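(* Let $G=\mathrm{Aut}(\mathbf{K})$ for a Fraïssé structure $\mathbf{K}$ with exhaustion $\bigcup_n\mathbf{A}_n$, and fix a minimal subflow $M\subseteq S(G)$. The following are equivalent: (1) retractions of $S(G)$ onto $M$ separate points of $S(G)$, i.e. for all $\alpha\neq\gamma$ in $S(G)$ there is a retraction $\phi:S(G)\to M$ with $\phi(\alpha)\neq\phi(\gamma)$; (2) for every $m<\omega$, $B'_m=\mathcal{P}(H_m)$.
   Context: $\mathbf{K}$ is a countably infinite ultrahomogeneous relational structure; $\mathbf{A}_1\subseteq\mathbf{A}_2\subseteq\cdots$ finite substructures, $|\mathbf{A}_n|=n$, union $\mathbf{K}$; $H_n=\mathrm{Emb}(\mathbf{A}_n,\mathbf{K})$. $S(G)$ is the inverse limit of the spaces $\beta H_n$ of ultrafilters along the continuous extensions of restriction maps $H_n\to H_m$, with right $G$-action: $S\in(\alpha g)(m)$ iff $\{x\in H_n:x\circ g|_{\mathbf{A}_m}\in S\}\in\alpha(n)$ (for $n$ with $g(\mathbf{A}_m)\subseteq\mathbf{A}_n$). A minimal subflow is a nonempty closed $G$-invariant set with no proper such subset; a retraction onto $M$ is a continuous $G$-equivariant $\phi:S(G)\to M$ with $\phi|_M=\mathrm{id}$. Identify subsets of $H_n$ with $2^{H_n}$, right action $(\chi\cdot g)(f)=\chi(g\circ f)$; $S\subseteq H_n$ is minimal if $\overline{\chi_S\cdot G}$ is a minimal $G$-flow. $B_n$ is the Boolean algebra generated by the minimal subsets of $H_n$; for $T\subseteq H_m$ and $n\geq m$,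 $i^n_m(T)=\{s\in H_n:s|_{\mathbf{A}_m}\in T\}$; $B'_m=\{T\subseteq H_m:\exists n\geq m\ (i^n_m(T)\in B_n)\}$. *)

From HB Require Import structures.
From mathcomp Require Import all_boot all_order.
From mathcomp Require Import all_classical.

Set Implicit Arguments.
Unset Strict Implicit.
Unset Printing Implicit Defensive.

Local Open Scope classical_set_scope.
Local Open Scope card_scope.

Record relstruct := RelStruct {
  carrier : Type;
  symbol : Type;
  arity : symbol -> nat;
  rel : forall l : symbol, ('I_(arity l) -> carrier) -> Prop }.

Section Defs.
Variable K : relstruct.
Local Notation T := (carrier K).

Definition is_aut (g : T -> T) : Prop :=
  bijective g /\
  forall (l : symbol K) (t : 'I_(arity l) -> T), rel t <-> rel (g \o t).

(* ultrahomogeneity: every isomorphism between finite substructures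
   (= partial embedding with finite domain D) extends to an automorphism *)
Definition ultrahomogeneous : Prop :=
  forall (D : set T) (p : T -> T), finite_set D ->
    (forall x y, D x -> D y -> p x = p y -> x = y) ->
    (forall (l : symbol K) (t : 'I_(arity l) -> T),
        (forall i, D (t i)) -> (rel t <-> rel (p \o t))) ->
    exists g, is_aut g /\ forall x, D x -> g x = p x.

Variable A : nat -> set T.

Definition exhaustion : Prop :=
  (forall n, A n #= `I_n) /\
  (forall m n, (m <= n)%N -> A m `<=` A n) /\
  \bigcup_n A n = setT.

Definition is_emb (n : nat) (f : {a : T | A n a} -> T) : Prop :=
  injective f /\
  forall (l : symbol K) (t : 'I_(arity l) -> {a : T | A n a}),
    rel (fun i => proj1_sig (t i)) <-> rel (fun i => f (t i)).

Definition H (n : nat) := {f : {a : T | A n a} -> T | is_emb f}.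

Definition restr (m n : nat) (x : H n) (y : H m) : Prop :=
  forall a (ha : A m a) (hb : A n a),
    proj1_sig y (exist _ a ha) = proj1_sig x (exist _ a hb).

Definition compg (m n : nat) (g : T -> T) (x : H n) (y : H m) : Prop :=
  forall a (ha : A m a) (hb : A n (g a)),
    proj1_sig y (exist _ a ha) = proj1_sig x (exist _ (g a) hb).

Definition ultra (X : Type) (U : set (set X)) : Prop :=
  U setT /\ ~ U set0 /\
  (forall P Q, U P -> P `<=` Q -> U Q) /\
  (forall P Q, U P -> U Q -> U (P `&` Q)) /\
  (forall P, U P \/ U (~` P)).

(* families (α(n))_n of set systems; S(G) is the inverse limit of the βH_n *)
Definition Sraw := forall n : nat, set (set (H n)).

Definition SG : set Sraw :=
  [set alpha | (forall n, ultra (alpha n)) /\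
    forall m n, (m <= n)%N -> forall S : set (H m),
      alpha m S <-> alpha n [set x | exists y, S y /\ restr x y]].

(* right action: S ∈ (α g)(m) iff {x ∈ H_n : x ∘ g|_{A_m} ∈ S} ∈ α(n),
   for n with g(A_m) ⊆ A_n *)
Definition act (alpha : Sraw) (g : T -> T) : Sraw :=
  fun m S => exists n, g @` A m `<=` A n /\
    alpha n [set x | exists y, S y /\ compg g x y].

(* topology of S(G) (inverse limit of Stone spaces): basic open sets
   {α : S ∈ α(n)} *)
Definition isopen (O : set Sraw) : Prop :=
  O `<=` SG /\
  forall alpha, O alpha -> exists n (S : set (H n)),
    alpha n S /\ forall beta, SG beta -> beta n S -> O beta.

Definition isclosed (C : set Sraw) : Prop := C `<=` SG /\ isopen (SG `\` C).

Definition invariant (N : set Sraw) : Prop :=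
  forall alpha g, N alpha -> is_aut g -> N (act alpha g).

Definition minimal_subflow (M : set Sraw) : Prop :=
  M `<=` SG /\ M !=set0 /\ isclosed M /\ invariant M /\
  forall N, N `<=` M -> N !=set0 -> isclosed N -> invariant N -> N = M.

(* continuous G-equivariant φ : S(G) -> M with φ|_M = id *)
Definition retraction (M : set Sraw) (phi : Sraw -> Sraw) : Prop :=
  (forall alpha, SG alpha -> M (phi alpha)) /\
  (forall n (S : set (H n)), isopen [set alpha | SG alpha /\ phi alpha n S]) /\
  (forall alpha g, SG alpha -> is_aut g -> phi (act alpha g) = act (phi alpha) g) /\
  (forall alpha, M alpha -> phi alpha = alpha).

(* subsets of H_n as points of 2^{H_n}; (χ·g)(f) = χ(g ∘ f) *)
Definition act2 (n : nat) (X : set (H n)) (g : T -> T) : set (H n) :=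
  [set f | exists f' : H n, X f' /\
     forall a (ha : A n a),
       proj1_sig f' (exist _ a ha) = g (proj1_sig f (exist _ a ha))].

Definition agree (n : nat) (F X Y : set (H n)) : Prop :=
  forall f, F f -> (X f <-> Y f).

(* product topology on 2^{H_n} *)
Definition closedH (n : nat) (Z : set (set (H n))) : Prop :=
  forall X, (forall F, finite_set F -> exists Y, Z Y /\ agree F X Y) -> Z X.

Definition invariantH (n : nat) (Z : set (set (H n))) : Prop :=
  forall X g, Z X -> is_aut g -> Z (act2 X g).

Definition orbit_closure (n : nat) (S : set (H n)) : set (set (H n)) :=
  [set X | forall F, finite_set F -> exists g, is_aut g /\ agree F X (act2 S g)].

Definition minimal_flowH (n : nat) (Y : set (set (H n))) : Prop :=
  Y !=set0 /\ closedH Y /\ invariantH Y /\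
  forall Z, Z `<=` Y -> Z !=set0 -> closedH Z -> invariantH Z -> Z = Y.

Definition minimal_subset (n : nat) (S : set (H n)) : Prop :=
  minimal_flowH (orbit_closure S).

Definition Bgen (n : nat) : set (set (H n)) :=
  [set P | forall F : set (set (H n)),
     (forall S, minimal_subset S -> F S) -> F set0 ->
     (forall Q, F Q -> F (~` Q)) ->
     (forall Q R, F Q -> F R -> F (Q `|` R)) -> F P].

Definition incl (m n : nat) (P : set (H m)) : set (H n) :=
  [set s | exists y, P y /\ restr s y].

Definition Bprime (m : nat) : set (set (H m)) :=
  [set P | exists n, (m <= n)%N /\ @Bgen n (@incl m n P)].

End Defs.

(* S(G) is a compact semigroup, with product (p * b)(m) ∋ Q iff
   {f : Q ∈ (p·f)(m)} ∈ b(m), into which G embeds densely. A retraction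
   onto M is continuous and equivariant, hence left multiplication by its
   value at 1; conversely left multiplication by an idempotent of M is a
   retraction onto M.

   For p ∈ M, the sets {f : Q ∈ (p·f)(n)} are minimal subsets of H_n, and
   every minimal subset S is of this form with p·S = S; by Ellis–Numakura p
   can be taken idempotent. So retractions separate α ≠ γ iff some minimal
   subset, hence some element of some B_n, separates them. If every B'_m is
   all of P(H_m) this is the case. Conversely, if retractions separate
   points, compactness makes each clopen {α : T ∈ α(m)} a finite union of
   sets defined by elements of the B_n, so that i^n_m(T) ∈ B_n for large n. *)

From Pilot Require Import Defs.
From HB Require Import structures.
From mathcomp Require Import all_boot all_order.
From mathcomp Require Import all_classical.
Local Open Scope classical_set_scope.
Set Implicit Arguments.
Unset Strict Implicit.
Unset Printing Implicit Defensive.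

Lemma finite_set_ind (X : Type) (P : set X -> Prop) :
  P set0 -> (forall B x, finite_set B -> P B -> P (x |` B)) ->
  forall B, finite_set B -> P B.
Proof.
move=> P0 PS; elim/Peq: X => X in P P0 PS *.
move=> B /finite_seqP [s ->]; elim: s => [|x s IH].
  suff -> : [set` [::]] = (set0 : set X) by [].
  by apply/seteqP; split => y.
suff -> : [set` (x :: s)] = x |` [set` s] by apply: PS => //; apply: finite_seq.
apply/seteqP; split => y /=; rewrite inE.
  by case/orP => [/eqP ->|ys]; [left|right].
by case => [->|ys]; apply/orP; [left|right].
Qed.

Lemma chain_finite_ub (X : Type) (F G : set (set X)) : total_on F subset ->
  finite_set G -> G `<=` F ->
  exists W0, (W0 = set0 \/ F W0) /\ forall W, G W -> W `<=` W0.
Proof.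
move=> Ftot; move: G; apply: finite_set_ind => [_|B x _ IH sub].
  by exists set0; split; [left|].
have [W0 [h0 hB]] := IH (fun W BW => sub W (or_intror BW)).
have Fx : F x := sub x (or_introl erefl).
have [xW0|W0x] : x `<=` W0 \/ W0 `<=` x.
  case: h0 => [->|FW0]; last by case: (Ftot _ _ FW0 Fx); [right|left].
  by right.
- by exists W0; split => // W [->|BW] //; exact: hB.
- exists x; split; first by right.
  by move=> W [->|BW] //; apply: subset_trans (hB W BW) W0x.
Qed.

Section SamuelCompactification.
Variable K : relstruct.
Variable A : nat -> set (carrier K).
Hypothesis exA : exhaustion A.
Hypothesis uhK : ultrahomogeneous K.
Local Notation T := (carrier K).
Local Notation Hn := (@H K A).
Local Notation Sr := (@Sraw K A).
Local Notation inc m n P := (@Defs.incl K A m n P).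

(** * Embeddings *)

Definition partial_emb (D : set T) (u : T -> T) :=
  (forall x y, D x -> D y -> u x = u y -> x = y) /\
  (forall (l : symbol K) (t : 'I_(arity l) -> T),
     (forall i, D (t i)) -> (Defs.rel t <-> Defs.rel (u \o t))).

Definition maps_into m n (u : T -> T) := forall a, A m a -> A n (u a).

Lemma A_mono m n : (m <= n)%N -> A m `<=` A n.
Proof. by case: exA => _ [h _]; apply: h. Qed.

Lemma A_finite n : finite_set (A n).
Proof. by case: exA => h _; exists n; apply: h. Qed.

Lemma A_cover t : exists n, A n t.
Proof.
case: exA => _ [_ h].
have : [set: T] t by [].
by rewrite -h => -[n _ hn]; exists n.
Qed.

Lemma finite_sub_A (D : set T) : finite_set D -> exists n, D `<=` A n.
Proof.
move: D; apply: finite_set_ind; first by exists 0%N.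
move=> B x _ [n hn]; have [k hk] := A_cover x.
exists (maxn n k) => y [->|By].
  exact: (A_mono (leq_maxr n k) hk).
exact: (A_mono (leq_maxl n k) (hn _ By)).
Qed.

Lemma maps_into_some m (u : T -> T) : exists n, maps_into m n u.
Proof.
have [n hn] := finite_sub_A (finite_image u (A_finite m)).
by exists n => a ha; apply: hn; exists a.
Qed.

Definition efun n (x : Hn n) : T -> T := fun t =>
  match pselect (A n t) with
  | left h => proj1_sig x (exist _ t h)
  | right _ => t end.

Lemma efunE n (x : Hn n) a (h : A n a) : efun x a = proj1_sig x (exist _ a h).
Proof.
by rewrite /efun; case: pselect => [h'|//]; rewrite (Prop_irrelevance h' h).
Qed.

Lemma emb_ext n (x y : Hn n) : (forall a, A n a -> efun x a = efun y a) -> x = y.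
Proof.
case: x => [f fP]; case: y => [g gP] E; apply: eq_exist.
apply: funext => -[a ha]; have := E a ha.
by rewrite (efunE (exist _ f fP) ha) (efunE (exist _ g gP) ha).
Qed.

Lemma efun_partial_emb n (x : Hn n) : partial_emb (A n) (efun x).
Proof.
case: x => [f [finj frel]]; split.
  move=> a b ha hb; rewrite (efunE _ ha) (efunE _ hb) /= => /finj.
  by move=> /(congr1 (@proj1_sig _ _)).
move=> l t ht; have := frel l (fun i => exist _ (t i) (ht i)); rewrite /=.
suff -> : efun (exist _ f (conj finj frel)) \o t = (fun i => f (exist _ (t i) (ht i)))
  by [].
by apply: funext => i /=; rewrite (efunE _ (ht i)).
Qed.

Lemma partial_emb_is_emb n u : partial_emb (A n) u ->
  is_emb (fun a : {a | A n a} => u (proj1_sig a)).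
Proof.
case=> uinj urel; split.
  by move=> [a ha] [b hb] /= /(uinj _ _ ha hb) eab; apply: eq_exist.
move=> l t; apply: (urel l (fun i => proj1_sig (t i))).
by move=> i; apply: (proj2_sig (t i)).
Qed.

Lemma partial_emb_id D : partial_emb D id.
Proof. by split. Qed.

(* Junk value: the inclusion, when [u] is not a partial embedding on A_n. *)
Definition emb n (u : T -> T) : Hn n :=
  match pselect (partial_emb (A n) u) with
  | left h => exist _ (fun a => u (proj1_sig a)) (partial_emb_is_emb h)
  | right _ => exist _ (fun a => proj1_sig a) (partial_emb_is_emb (partial_emb_id (A n)))
  end.

Lemma embE n u : partial_emb (A n) u -> forall a, A n a -> efun (emb n u) a = u a.
Proof. by move=> hu a ha; rewrite (efunE _ ha) /emb; case: pselect. Qed.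

Lemma partial_emb_eq D u v : (forall a, D a -> u a = v a) ->
  partial_emb D u -> partial_emb D v.
Proof.
move=> E [uinj urel]; split.
  by move=> x y hx hy; rewrite -(E x hx) -(E y hy); apply: uinj.
move=> l t ht; suff <- : u \o t = v \o t by apply: urel.
by apply: funext => i /=; apply: E.
Qed.

Lemma eq_emb n u v : (forall a, A n a -> u a = v a) -> emb n u = emb n v.
Proof.
move=> E; case: (pselect (partial_emb (A n) u)) => hu.
  have hv := partial_emb_eq E hu.
  by apply: emb_ext => a ha; rewrite !embE //; apply: E.
have hv : ~ partial_emb (A n) v.
  by move=> hv; apply: hu; apply: (partial_emb_eq _ hv) => a ha; rewrite E.
rewrite /emb; destruct (pselect (partial_emb (A n) u)); first by [].
by destruct (pselect (partial_emb (A n) v)).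
Qed.

Lemma efunK n (x : Hn n) : emb n (efun x) = x.
Proof. by apply: emb_ext => a ha; rewrite embE //; apply: efun_partial_emb. Qed.

Lemma partial_emb_sub D E u : D `<=` E -> partial_emb E u -> partial_emb D u.
Proof.
move=> DE [uinj urel]; split.
  by move=> x y hx hy; apply: uinj; apply: DE.
by move=> l t ht; apply: urel => i; apply: DE.
Qed.

Lemma partial_emb_comp D E u v : partial_emb D u -> (forall a, D a -> E (u a)) ->
  partial_emb E v -> partial_emb D (v \o u).
Proof.
move=> [uinj urel] DE [vinj vrel]; split.
  move=> x y hx hy /= /(vinj _ _ (DE _ hx) (DE _ hy)); exact: uinj.
move=> l t ht; rewrite (urel l t ht).
exact: (vrel l (u \o t) (fun i => DE _ (ht i))).
Qed.

Lemma aut_partial_emb (g : T -> T) D : is_aut g -> partial_emb D g.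
Proof. by move=> [gbij grel]; split => [x y _ _|l t _]; [apply: bij_inj|apply: grel]. Qed.

Lemma aut_id : is_aut (id : T -> T).
Proof. by split; [exists id|]. Qed.

Lemma aut_comp (g h : T -> T) : is_aut g -> is_aut h -> is_aut (g \o h).
Proof.
move=> [gb gr] [hb hr]; split; first exact: bij_comp.
by move=> l t; rewrite (hr l t) (gr l (h \o t)).
Qed.

Lemma partial_emb_aut_comp n (g : T -> T) (f : Hn n) : is_aut g ->
  partial_emb (A n) (g \o efun f).
Proof.
move=> ga; apply: (partial_emb_comp (E := setT) (efun_partial_emb f)) => //.
exact: aut_partial_emb.
Qed.

Lemma emb_aut_surj n (x : Hn n) : exists g, is_aut g /\ emb n g = x.
Proof.
have [pinj prel] := efun_partial_emb x.
have [g [ga gE]] := uhK (A_finite n) pinj prel.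
by exists g; split => //; rewrite -[RHS]efunK; exact: eq_emb.
Qed.

(** * The semigroup S(G) *)

Definition precomp m n (u : T -> T) (Q : set (Hn m)) : set (Hn n) :=
  [set x | exists y, Q y /\ compg u x y].
Arguments precomp {m} n u Q.

Lemma compgE m n u (x : Hn n) (y : Hn m) : partial_emb (A m) u -> maps_into m n u ->
  (compg u x y <-> y = emb m (efun x \o u)).
Proof.
move=> pu mu; have pc := partial_emb_comp pu mu (efun_partial_emb x).
split => [c|-> a ha hb].
  apply: emb_ext => a ha; rewrite embE // (efunE _ ha) (c a ha (mu a ha)) /=.
  by rewrite (efunE _ (mu a ha)).
by rewrite -(efunE (emb m (efun x \o u)) ha) -(efunE x hb) embE.
Qed.

Lemma precompE m n u (Q : set (Hn m)) x : partial_emb (A m) u -> maps_into m n u ->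
  (precomp n u Q x <-> Q (emb m (efun x \o u))).
Proof.
move=> pu mu; split => [[y [Qy /(compgE _ _ pu mu) <-]] // | Qx].
by exists (emb m (efun x \o u)); split => //; apply/(compgE _ _ pu mu).
Qed.

Lemma inclE m n (P : set (Hn m)) (s : Hn n) : (m <= n)%N ->
  (inc m n P s <-> P (emb m (efun s))).
Proof.
by move=> mn; exact: (@precompE m n id P s (partial_emb_id _) (A_mono mn)).
Qed.

Lemma precompC m n u (Q : set (Hn m)) : partial_emb (A m) u -> maps_into m n u ->
  forall x, precomp n u (~` Q) x <-> (~` precomp n u Q) x.
Proof. by move=> pu mu x; rewrite /= !(precompE _ _ pu mu). Qed.

Section Ultrafilter.
Variables (X : Type) (U : set (set X)).
Hypothesis hU : ultra U.

Lemma ultraT : U setT. Proof. by case: hU. Qed.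
Lemma ultra0 : ~ U set0. Proof. by case: hU => _ []. Qed.
Lemma ultraS P Q : U P -> P `<=` Q -> U Q.
Proof. by case: hU => _ [_ [h _]] UP PQ; apply: h UP PQ. Qed.
Lemma ultraI P Q : U P -> U Q -> U (P `&` Q).
Proof. by case: hU => _ [_ [_ [h _]]]; apply: h. Qed.
Lemma ultraN P : U P -> ~ U (~` P).
Proof. by move=> UP UNP; apply: ultra0; apply: ultraS (ultraI UP UNP) _ => x []. Qed.
Lemma ultraNC P : ~ U P -> U (~` P).
Proof. by case: hU => _ [_ [_ [_ /(_ P) []]]]. Qed.
Lemma ultra_iff P Q : (forall x, P x <-> Q x) -> (U P <-> U Q).
Proof. by move=> E; split => h; apply: ultraS h _ => x /E. Qed.
Lemma ultra_neq0 P : U P -> P !=set0.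
Proof.
move=> UP; apply: contrapT => nP; apply: ultra0; apply: ultraS UP _ => x Px.
by apply: nP; exists x.
Qed.
Lemma ultraU P Q : U (P `|` Q) <-> U P \/ U Q.
Proof.
split=> [h|[] h]; last 2 first.
- by apply: ultraS h _ => x Px; left.
- by apply: ultraS h _ => x Qx; right.
apply: contrapT => /not_orP [/ultraNC nP /ultraNC nQ]; apply: ultra0.
apply: ultraS (ultraI h (ultraI nP nQ)) _ => x [[Px|Qx] [nPx nQx]].
  exact: nPx.
exact: nQx.
Qed.
End Ultrafilter.

Lemma SG_ultra (b : Sr) n : SG b -> ultra (b n).
Proof. by case=> h _; apply: h. Qed.

Lemma SG_incl (b : Sr) m n (Q : set (Hn m)) : SG b -> (m <= n)%N ->
  (b m Q <-> b n (inc m n Q)).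
Proof. by case=> _ h mn; apply: h. Qed.

Lemma precomp_incl m n N u (Q : set (Hn m)) : (n <= N)%N -> partial_emb (A m) u ->
  maps_into m n u -> forall s, inc n N (precomp n u Q) s <-> precomp N u Q s.
Proof.
move=> nN pu mu s.
have muN : maps_into m N u by move=> a ha; apply: (A_mono nN); apply: mu.
rewrite (inclE _ _ nN) (precompE _ _ pu mu) (precompE _ _ pu muN).
suff -> : emb m (efun (emb n (efun s)) \o u) = emb m (efun s \o u) by [].
apply: eq_emb => a ha /=; rewrite embE //; last exact: mu.
exact: (partial_emb_sub (A_mono nN) (efun_partial_emb s)).
Qed.

Lemma precomp_level (b : Sr) m n n' u (Q : set (Hn m)) : SG b ->
  partial_emb (A m) u -> maps_into m n u -> maps_into m n' u ->
  (b n (precomp n u Q) <-> b n' (precomp n' u Q)).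
Proof.
move=> sb pu mu mu'.
rewrite (SG_incl _ sb (leq_maxl n n')) (SG_incl _ sb (leq_maxr n n')).
rewrite (ultra_iff (SG_ultra _ sb) (precomp_incl Q (leq_maxl n n') pu mu)).
by rewrite (ultra_iff (SG_ultra _ sb) (precomp_incl Q (leq_maxr n n') pu mu')).
Qed.

Lemma actE (b : Sr) m n u (Q : set (Hn m)) : SG b -> partial_emb (A m) u ->
  maps_into m n u -> (act b u Q <-> b n (precomp n u Q)).
Proof.
move=> sb pu mu; split => [[n0 [sub h]]|h].
  have mu0 : maps_into m n0 u by move=> a ha; apply: sub; exists a.
  by rewrite (precomp_level _ sb pu mu mu0).
by exists n; split => // _ [a ha <-]; apply: mu.
Qed.

Definition act_set (p : Sr) m (Q : set (Hn m)) : set (Hn m) :=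
  [set f | act p (efun f) Q].

Lemma act_setE (p : Sr) m n (Q : set (Hn m)) f : SG p -> maps_into m n (efun f) ->
  (act_set p Q f <-> p n (precomp n (efun f) Q)).
Proof. by move=> sp mf; apply: actE => //; apply: efun_partial_emb. Qed.

Lemma act_setT (p : Sr) m (f : Hn m) : SG p -> act_set p setT f.
Proof.
move=> sp; have [n mf] := maps_into_some m (efun f); rewrite (act_setE _ sp mf).
apply: (ultraS (SG_ultra n sp) (ultraT (SG_ultra n sp))) => x _.
by rewrite (precompE _ _ (efun_partial_emb f) mf).
Qed.

Lemma act_set_mono (p : Sr) m (Q1 Q2 : set (Hn m)) : SG p -> Q1 `<=` Q2 ->
  act_set p Q1 `<=` act_set p Q2.
Proof.
move=> sp sub f; have [n mf] := maps_into_some m (efun f); rewrite !(act_setE _ sp mf).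
move=> h; apply: (ultraS (SG_ultra n sp) h) => x.
by rewrite !(precompE _ _ (efun_partial_emb f) mf); exact: sub.
Qed.

Lemma act_set0 (p : Sr) m : SG p -> act_set p (set0 : set (Hn m)) = set0.
Proof.
move=> sp; apply/seteqP; split => // f.
have [n mf] := maps_into_some m (efun f); rewrite (act_setE _ sp mf).
move=> h; apply: (ultra0 (SG_ultra n sp)); apply: (ultraS (SG_ultra n sp) h) => x.
by move/(precompE _ _ (efun_partial_emb f) mf).
Qed.

Lemma act_setI (p : Sr) m (Q1 Q2 : set (Hn m)) : SG p ->
  act_set p Q1 `&` act_set p Q2 `<=` act_set p (Q1 `&` Q2).
Proof.
move=> sp f [+ +]; have [n mf] := maps_into_some m (efun f).
rewrite !(act_setE _ sp mf) => h1 h2.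
apply: (ultraS (SG_ultra n sp) (ultraI (SG_ultra n sp) h1 h2)) => x.
by rewrite /= !(precompE _ _ (efun_partial_emb f) mf).
Qed.

Lemma act_setC (p : Sr) m (Q : set (Hn m)) : SG p ->
  act_set p (~` Q) = ~` act_set p Q.
Proof.
move=> sp; apply/seteqP; split=> f; have [n mf] := maps_into_some m (efun f);
  rewrite /= !(act_setE _ sp mf);
  rewrite (ultra_iff (SG_ultra n sp) (precompC _ (efun_partial_emb f) mf)).
  by move=> h1 h2; apply: (ultraN (SG_ultra n sp) h2 h1).
exact: (ultraNC (SG_ultra n sp)).
Qed.

Lemma act_set_incl (p : Sr) m n (Q : set (Hn m)) : SG p -> (m <= n)%N ->
  act_set p (inc m n Q) = inc m n (act_set p Q).
Proof.
move=> sp mn; apply/predeqP => f; have [N mf] := maps_into_some n (efun f).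
have pf := partial_emb_sub (A_mono mn) (efun_partial_emb f).
have pg : partial_emb (A m) (efun (emb m (efun f))) := efun_partial_emb _.
have mg : maps_into m N (efun (emb m (efun f))).
  by move=> a ha; rewrite embE //; apply: mf; apply: (A_mono mn).
rewrite (inclE _ _ mn) (act_setE _ sp mf) (act_setE _ sp mg).
apply: (ultra_iff (SG_ultra N sp)) => x.
rewrite (precompE _ _ (efun_partial_emb f) mf) (precompE _ _ pg mg) (inclE _ _ mn).
suff -> : emb m (efun (emb n (efun x \o efun f))) = emb m (efun x \o efun (emb m (efun f)))
  by [].
apply: eq_emb => a ha /=; rewrite [LHS]embE ?embE //; last exact: A_mono mn _ ha.
exact: partial_emb_comp (efun_partial_emb f) mf (efun_partial_emb x).
Qed.

Lemma act_set_precomp (p : Sr) m N u (Q : set (Hn m)) : SG p ->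
  partial_emb (A m) u -> maps_into m N u ->
  act_set p (precomp N u Q) = precomp N u (act_set p Q).
Proof.
move=> sp pu mu; apply/predeqP => x; have [N' mx] := maps_into_some N (efun x).
have pxu := partial_emb_comp pu mu (efun_partial_emb x).
have pg : partial_emb (A m) (efun (emb m (efun x \o u))) := efun_partial_emb _.
have mg : maps_into m N' (efun (emb m (efun x \o u))).
  by move=> a ha; rewrite embE //; apply: mx; apply: mu.
rewrite (precompE _ _ pu mu) (act_setE _ sp mx) (act_setE _ sp mg).
apply: (ultra_iff (SG_ultra N' sp)) => z.
rewrite (precompE _ _ (efun_partial_emb x) mx) (precompE _ _ pg mg) (precompE _ _ pu mu).
suff -> : emb m (efun (emb N (efun z \o efun x)) \o u) =
          emb m (efun z \o efun (emb m (efun x \o u))) by [].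
apply: eq_emb => a ha /=; rewrite [LHS]embE ?embE //; last exact: mu.
exact: partial_emb_comp (efun_partial_emb x) mx (efun_partial_emb z).
Qed.

Lemma Sraw_eq (b c : Sr) : (forall m Q, b m Q <-> c m Q) -> b = c.
Proof.
move=> E; apply: functional_extensionality_dep => m.
by apply/predeqP; apply: E.
Qed.

Definition emul (p b : Sr) : Sr := fun m Q => b m (act_set p Q).

Lemma emul_SG (p b : Sr) : SG p -> SG b -> SG (emul p b).
Proof.
move=> sp sb; split=> [n|m n mn Q]; last first.
  by rewrite /emul (SG_incl _ sb mn) act_set_incl.
rewrite /emul; have ub := SG_ultra n sb.
split; [|split; [|split; [|split]]].
- by apply: (ultraS ub (ultraT ub)) => f _; apply: act_setT.
- by rewrite act_set0 //; apply: ultra0 ub.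
- by move=> P Q h PQ; apply: (ultraS ub h); apply: act_set_mono.
- by move=> P Q h1 h2; apply: (ultraS ub (ultraI ub h1 h2)); apply: act_setI.
- by move=> P; rewrite act_setC //; case: (pselect (b n (act_set p P))) => h;
    [left|right; apply: ultraNC].
Qed.

(* The image of g in the embedding of G into S(G). *)
Definition pt (g : T -> T) : Sr := fun n Q => Q (emb n g).

Lemma emb_incl (g : T -> T) m n (Q : set (Hn m)) : is_aut g -> (m <= n)%N ->
  (inc m n Q (emb n g) <-> Q (emb m g)).
Proof.
move=> ga mn; rewrite (inclE _ _ mn).
suff -> : emb m (efun (emb n g)) = emb m g by [].
by apply: eq_emb => a ha; rewrite embE //; [exact: aut_partial_emb|exact: A_mono ha].
Qed.

Lemma pt_SG (g : T -> T) : is_aut g -> SG (pt g).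
Proof.
move=> ga; split=> [n|m n mn Q]; last exact: (iff_sym (emb_incl Q ga mn)).
split; [by []|split; [by []|split; [|split]]].
- by move=> P Q h; apply.
- by [].
- by move=> P; case: (pselect (P (emb n g))) => h; [left|right].
Qed.

Lemma act_emul (b : Sr) (g : T -> T) : SG b -> is_aut g -> act b g = emul b (pt g).
Proof.
move=> sb ga; apply: Sraw_eq => m Q; rewrite /emul /pt /act_set /=.
have [n mg] := maps_into_some m g.
have pg : partial_emb (A m) g := aut_partial_emb _ ga.
have mg' : maps_into m n (efun (emb m g)) by move=> a ha; rewrite embE //; apply: mg.
rewrite (actE Q sb pg mg) (actE Q sb (efun_partial_emb _) mg').
apply: (ultra_iff (SG_ultra n sb)) => x.
rewrite (precompE _ _ pg mg) (precompE _ _ (efun_partial_emb _) mg').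
suff -> : emb m (efun x \o g) = emb m (efun x \o efun (emb m g)) by [].
by apply: eq_emb => a ha /=; rewrite embE.
Qed.

Lemma act2E n (X : set (Hn n)) (g : T -> T) f : is_aut g ->
  (act2 X g f <-> X (emb n (g \o efun f))).
Proof.
move=> ga; have pc := partial_emb_aut_comp f ga; split.
  move=> [f' [Xf' E]]; suff <- : f' = emb n (g \o efun f) by [].
  by apply: emb_ext => a ha; rewrite embE // (efunE _ ha) E /= (efunE _ ha).
move=> h; exists (emb n (g \o efun f)); split => // a ha.
by rewrite -(efunE (emb n (g \o efun f)) ha) embE //= (efunE f ha).
Qed.

Lemma act_set_pt (g : T -> T) n (X : set (Hn n)) : is_aut g ->
  act_set (pt g) X = act2 X g.
Proof.
move=> ga; apply/predeqP => f; have [N mf] := maps_into_some n (efun f).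
rewrite (act_setE _ (pt_SG ga) mf) /pt (precompE _ _ (efun_partial_emb f) mf).
rewrite (act2E _ _ ga).
suff -> : emb n (efun (emb N g) \o efun f) = emb n (g \o efun f) by [].
by apply: eq_emb => a ha /=; rewrite embE //; [exact: aut_partial_emb|exact: mf].
Qed.

Lemma act_set_emul (p q : Sr) m (Q : set (Hn m)) : SG p -> SG q ->
  act_set (emul p q) Q = act_set q (act_set p Q).
Proof.
move=> sp sq; apply/predeqP => f; have [N mf] := maps_into_some m (efun f).
rewrite (act_setE _ (emul_SG sp sq) mf) (act_setE _ sq mf) /emul.
by rewrite (act_set_precomp _ sp (efun_partial_emb f) mf).
Qed.

Lemma emulA (p q : Sr) : SG p -> SG q -> forall r, emul (emul p q) r = emul p (emul q r).
Proof. by move=> sp sq r; apply: Sraw_eq => m Q; rewrite /emul act_set_emul. Qed.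

Lemma emul_pt_id (b : Sr) : SG b -> emul (pt id) b = b.
Proof.
move=> sb; apply: Sraw_eq => m Q; rewrite /emul (act_set_pt _ aut_id).
apply: (ultra_iff (SG_ultra m sb)) => f.
by rewrite (act2E _ _ aut_id) efunK.
Qed.

Lemma act_pt (g : T -> T) : is_aut g -> act (pt id) g = pt g.
Proof.
by move=> ga; rewrite (act_emul (pt_SG aut_id) ga) emul_pt_id //; apply: pt_SG.
Qed.

(** * Topology and compactness *)

Lemma isclosed_of (C : set Sr) : C `<=` @SG K A ->
  (forall a, SG a -> ~ C a -> exists n (Q : set (Hn n)),
      a n Q /\ forall b, SG b -> b n Q -> ~ C b) -> isclosed C.
Proof.
move=> sub h; split => //; split => [a []//|a [sa nCa]].
have [n [Q [aQ hb]]] := h a sa nCa.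
by exists n, Q; split => // b sb bQ; split => //; apply: hb.
Qed.

Lemma closed_SG (C : set Sr) : isclosed C -> C `<=` @SG K A.
Proof. by case. Qed.

Lemma closed_nbhd (C : set Sr) a : isclosed C -> SG a -> ~ C a ->
  exists n (Q : set (Hn n)), a n Q /\ forall b, SG b -> b n Q -> ~ C b.
Proof.
move=> [_ [_ h]] sa nCa; have [n [Q [aQ hb]]] := h a (conj sa nCa).
by exists n, Q; split => // b sb bQ; case: (hb b sb bQ).
Qed.

Lemma basic_closed n (Q : set (Hn n)) : isclosed [set b : Sr | SG b /\ b n Q].
Proof.
apply: isclosed_of => [b []//|a sa nC].
have naQ : ~ a n Q by move=> h; apply: nC.
exists n, (~` Q); split; first exact: (ultraNC (SG_ultra n sa)).
by move=> b sb bQ [_ bQ']; apply: (ultraN (SG_ultra n sb) bQ' bQ).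
Qed.

Lemma SG_closed : isclosed (@SG K A).
Proof. by apply: isclosed_of. Qed.

Lemma closed_ext (C C' : set Sr) : isclosed C ->
  (forall b, SG b -> (C b <-> C' b)) -> C' `<=` @SG K A -> isclosed C'.
Proof.
move=> cC E sub; apply: isclosed_of => // a sa nC'.
have nC : ~ C a by rewrite E.
have [n [Q [aQ hb]]] := closed_nbhd cC sa nC.
by exists n, Q; split => // b sb bQ; rewrite -E //; apply: hb.
Qed.

Lemma closedI (C1 C2 : set Sr) : isclosed C1 -> isclosed C2 -> isclosed (C1 `&` C2).
Proof.
move=> c1 c2; apply: isclosed_of => [b [h _]|a sa nC]; first exact: (closed_SG c1).
case: (pselect (C1 a)) => h1.
  have nC2 : ~ C2 a by move=> h2; apply: nC.
  have [n [Q [aQ hb]]] := closed_nbhd c2 sa nC2.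
  by exists n, Q; split => // b sb bQ [_ h2]; apply: (hb b sb bQ h2).
have [n [Q [aQ hb]]] := closed_nbhd c1 sa h1.
by exists n, Q; split => // b sb bQ [h1' _]; apply: (hb b sb bQ h1').
Qed.

Lemma closed_bigcap (I : Type) (C : I -> set Sr) : (forall i, isclosed (C i)) ->
  isclosed [set b | SG b /\ forall i, C i b].
Proof.
move=> cC; apply: isclosed_of => [b []//|a sa nC].
have [i hi] : exists i, ~ C i a.
  by apply/existsNP => h; apply: nC.
have [n [Q [aQ hb]]] := closed_nbhd (cC i) sa hi.
by exists n, Q; split => // b sb bQ [_ h]; apply: (hb b sb bQ).
Qed.

Lemma nbhdI (b : Sr) n1 (Q1 : set (Hn n1)) n2 (Q2 : set (Hn n2)) :
  SG b -> b n1 Q1 -> b n2 Q2 -> exists N (Q : set (Hn N)),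
  b N Q /\ forall c, SG c -> c N Q -> c n1 Q1 /\ c n2 Q2.
Proof.
move=> sb h1 h2; set N := maxn n1 n2.
have l1 : (n1 <= N)%N := leq_maxl _ _.
have l2 : (n2 <= N)%N := leq_maxr _ _.
exists N, (inc n1 N Q1 `&` inc n2 N Q2); split.
  by apply: (ultraI (SG_ultra N sb)); rewrite -SG_incl.
move=> c sc cQ; rewrite (SG_incl _ sc l1) (SG_incl _ sc l2).
by split; apply: (ultraS (SG_ultra N sc) cQ) => x [].
Qed.

Lemma fin_nbhd (I : Type) (b : Sr) (R : Sr -> I -> Prop) : SG b ->
  (forall i, exists n (Q : set (Hn n)), b n Q /\ forall c, SG c -> c n Q -> R c i) ->
  forall F : set I, finite_set F -> exists N (Q : set (Hn N)),
    b N Q /\ forall c, SG c -> c N Q -> forall i, F i -> R c i.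
Proof.
move=> sb hR; apply: finite_set_ind.
  by exists 0%N, setT; split => //; apply: (ultraT (SG_ultra 0 sb)).
move=> B x _ [N [Q [bQ hQ]]].
have [n [Q' [bQ' hQ']]] := hR x.
have [N' [Q'' [bQ'' h]]] := nbhdI sb bQ bQ'.
exists N', Q''; split => // c sc cQ i [->|Bi]; have [c1 c2] := h c sc cQ.
  exact: hQ'.
exact: hQ.
Qed.

Lemma density (b : Sr) n (Q : set (Hn n)) : SG b -> b n Q ->
  exists g, is_aut g /\ Q (emb n g).
Proof.
move=> sb bQ; have [x Qx] := ultra_neq0 (SG_ultra n sb) bQ.
by have [g [ga gx]] := emb_aut_surj x; exists g; rewrite gx.
Qed.

Definition autK := {g : T -> T | is_aut g}.
Definition cyl n (Q : set (Hn n)) : set autK := [set g | Q (emb n (proj1_sig g))].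

Definition point_of_ultra (U : set_system autK) : Sr := fun n Q => U (cyl Q).

Lemma SG_point_of_ultra (U : set_system autK) : UltraFilter U -> SG (point_of_ultra U).
Proof.
move=> UU; split=> [n|m n mn Q]; last first.
  rewrite /point_of_ultra; suff -> : cyl (inc m n Q) = cyl Q by [].
  by apply/predeqP => -[g ga]; apply: emb_incl.
rewrite /point_of_ultra; split; [|split; [|split; [|split]]].
- exact: filterT.
- by move=> h; apply: (filter_not_empty U); apply: (filterS _ h) => g [].
- by move=> P Q h PQ; apply: (filterS _ h) => g; apply: PQ.
- by move=> P Q h1 h2; exact: filterI h1 h2.
- by move=> P; case: (in_ultra_setVsetC (cyl P) UU) => h; [left|right].
Qed.

Section Compactness.
Variables (I : Type) (C0 : set Sr) (C : I -> set Sr).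
Hypothesis cC0 : isclosed C0.
Hypothesis cC : forall i, isclosed (C i).
Hypothesis FIP :
  forall F : set I, finite_set F -> exists b, C0 b /\ forall i, F i -> C i b.

(* An ultrafilter on G refining the cylinders of these constraints defines a
   point of C0 lying in every C i. *)
Definition fip_base : set (set I * {n : nat & set (Hn n)}) :=
  [set j | finite_set j.1 /\ forall b, C0 b ->
     (forall i, j.1 i -> C i b) -> b (projT1 j.2) (projT2 j.2)].

Definition fip_filter := filter_from fip_base (fun j => cyl (projT2 j.2)).

Lemma fip_filter_proper : ProperFilter fip_filter.
Proof.
apply: filter_from_proper => [|[F [n Q]] [fF hF] /=].
  apply: filter_from_filter.
    exists (set0, existT _ 0%N setT); split => //= b /(closed_SG cC0) sb _.
    exact: (ultraT (SG_ultra 0 sb)).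
  move=> [F1 [n1 Q1]] [F2 [n2 Q2]] [f1 h1] [f2 h2]; set N := maxn n1 n2.
  have l1 : (n1 <= N)%N := leq_maxl _ _; have l2 : (n2 <= N)%N := leq_maxr _ _.
  exists (F1 `|` F2, existT _ N (inc n1 N Q1 `&` inc n2 N Q2)).
    split => /=; first by rewrite finite_setU.
    move=> b C0b hb; have sb := closed_SG cC0 C0b.
    apply: (ultraI (SG_ultra _ sb)); rewrite -SG_incl //.
      by apply: h1 => // i Fi; apply: hb; left.
    by apply: h2 => // i Fi; apply: hb; right.
  by move=> [g ga] [/= q1 q2]; split; [apply/(emb_incl _ ga l1)|apply/(emb_incl _ ga l2)].
have [b [C0b hb]] := FIP fF.
have [g [ga gQ]] := density (closed_SG cC0 C0b) (hF b C0b hb).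
by exists (exist _ g ga).
Qed.

Lemma SG_compact : exists b, C0 b /\ forall i, C i b.
Proof.
have [U [UU sub]] := ultraFilterLemma fip_filter_proper.
have sa := SG_point_of_ultra UU.
have in_closed X F : isclosed X -> finite_set F ->
    (forall b, C0 b -> (forall i, F i -> C i b) -> X b) -> X (point_of_ultra U).
  move=> cX fF hX; apply: contrapT => nX.
  have [n [Q [aQ hQ]]] := closed_nbhd cX sa nX.
  have UnQ : U (cyl (~` Q)).
    apply: sub; exists (F, existT _ n (~` Q)) => //; split => //= b C0b hb.
    have sb := closed_SG cC0 C0b.
    by apply: (ultraNC (SG_ultra n sb)) => bQ; apply: hQ b sb bQ (hX b C0b hb).
  move: aQ; rewrite /point_of_ultra => aQ.
  by apply: (filter_not_empty U); apply: (filterS _ (filterI aQ UnQ)) => g [].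
exists (point_of_ultra U); split; first exact: in_closed cC0 (finite_set0 _) _.
by move=> i; apply: in_closed (cC i) (finite_set1 i) _ => b _; apply.
Qed.

End Compactness.

Lemma SG_finite_subcover (I : Type) (C0 : set Sr) (C : I -> set Sr) :
  isclosed C0 -> (forall i, isclosed (C i)) ->
  (forall b, C0 b -> exists i, ~ C i b) ->
  exists F : set I, finite_set F /\ forall b, C0 b -> exists i, F i /\ ~ C i b.
Proof.
move=> cC0 cC cover; apply: contrapT => nF.
have [|b [C0b hb]] := SG_compact cC0 cC.
  move=> F fF; apply: contrapT => nb; apply: nF; exists F; split => // b C0b.
  apply: contrapT => ni; apply: nb; exists b; split => // i Fi.
  by apply: contrapT => nc; apply: ni; exists i.
by have [i] := cover b C0b; apply.
Qed.

Lemma SG_eq (b c : Sr) : SG b -> SG c -> (forall n Q, b n Q -> c n Q) -> b = c.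
Proof.
move=> sb sc h; apply: Sraw_eq => n Q; split=> [|cQ]; first exact: h.
apply: contrapT => /(ultraNC (SG_ultra n sb)) /h.
exact: (ultraN (SG_ultra n sc) cQ).
Qed.

Lemma SG_neq (b c : Sr) : SG b -> SG c -> b <> c ->
  exists n (Q : set (Hn n)), b n Q /\ ~ c n Q.
Proof.
move=> sb sc nbc; apply: contrapT => h; apply: nbc; apply: SG_eq => // n Q bQ.
by apply: contrapT => nc; apply: h; exists n, Q.
Qed.

Lemma act_set_nbhd (q : Sr) m (Q : set (Hn m)) f : SG q ->
  exists N (P : set (Hn N)), q N P /\
    forall c, SG c -> c N P -> (act_set c Q f <-> act_set q Q f).
Proof.
move=> sq; have [N mf] := maps_into_some m (efun f).
case: (pselect (act_set q Q f)) => h.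
  exists N, (precomp N (efun f) Q); split; first by rewrite -(act_setE _ sq mf).
  by move=> c sc cP; split => // _; rewrite (act_setE _ sc mf).
exists N, (~` precomp N (efun f) Q); split.
  by apply: (ultraNC (SG_ultra N sq)); rewrite -(act_setE _ sq mf).
move=> c sc cP; split => // hc; exfalso; move: hc; rewrite (act_setE _ sc mf).
by move/(ultraN (SG_ultra N sc)).
Qed.

Lemma closed_act_set m (Q : set (Hn m)) f (P : Prop) :
  isclosed [set q : Sr | SG q /\ (act_set q Q f <-> P)].
Proof.
apply: isclosed_of => [b []//|a sa nC].
have [N [P' [aP' h]]] := act_set_nbhd Q f sa.
exists N, P'; split => // b sb bP' [_ hb]; apply: nC; split => //.
by rewrite -(h b sb bP').
Qed.

Lemma closed_act_set_preimage n (Q : set (Hn n)) (Z : set (set (Hn n))) :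
  closedH Z -> isclosed [set q : Sr | SG q /\ Z (act_set q Q)].
Proof.
move=> cZ; apply: isclosed_of => [q []//|a sa nZ].
have [F [fF hF]] : exists F, finite_set F /\ ~ exists Y, Z Y /\ agree F (act_set a Q) Y.
  apply: contrapT => h; apply: nZ; split => //; apply: cZ => F fF.
  by apply: contrapT => nY; apply: h; exists F.
have [k [P [aP hP]]] := fin_nbhd (R := fun c f => act_set c Q f <-> act_set a Q f) sa
  (fun f => act_set_nbhd Q f sa) fF.
exists k, P; split => // b sb bP [_ Zb]; apply: hF; exists (act_set b Q); split => //.
by move=> f Ff; rewrite (hP b sb bP f Ff).
Qed.

Lemma closed_emul_eq (u v : Sr) : SG u -> SG v ->
  isclosed [set c | SG c /\ emul u c = v].
Proof.
move=> su sv; apply: isclosed_of => [c []//|c sc nc].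
have ne : emul u c <> v by move=> e; apply: nc.
have [n [Q [cQ nvQ]]] := SG_neq (emul_SG su sc) sv ne.
by exists n, (act_set u Q); split => // d sd dQ [_ e]; apply: nvQ; rewrite -e.
Qed.

Lemma emul_image_closed (p : Sr) (C : set Sr) : SG p -> isclosed C ->
  isclosed [set c | exists b, C b /\ emul p b = c].
Proof.
move=> sp cC; apply: isclosed_of => [_ [b [Cb <-]]|g sg nI].
  by apply: emul_SG => //; apply: closed_SG cC _ Cb.
(* By compactness of C, finitely many basic neighbourhoods of g avoid p * C. *)
pose J := {j : {n : nat & set (Hn n)} | g (projT1 j) (projT2 j)}.
pose holds (c : Sr) (j : J) := c (projT1 (proj1_sig j)) (projT2 (proj1_sig j)).
have [F [fF hF]] : exists F : set J,
    finite_set F /\ forall b, C b -> exists j, F j /\ ~ (SG b /\ holds (emul p b) j).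
  apply: (SG_finite_subcover cC (fun j => basic_closed (act_set p (projT2 (proj1_sig j))))).
  move=> b Cb; have ne : g <> emul p b by move=> e; apply: nI; exists b.
  have [n [Q [gQ nQ]]] := SG_neq sg (emul_SG sp (closed_SG cC Cb)) ne.
  by exists (exist _ (existT _ n Q) gQ) => -[].
have [N [Q [gQ hQ]]] := fin_nbhd (R := holds) sg
  (fun j => ex_intro _ _ (ex_intro _ _ (conj (proj2_sig j) (fun c _ cj => cj)))) fF.
exists N, Q; split => // c sc cQ [b [Cb ec]].
have [j [Fj []]] := hF b Cb; split; first exact: closed_SG cC _ Cb.
by rewrite ec; apply: hQ.
Qed.

(** * Idempotents *)

Lemma closed_chain_meet (Z : set Sr) (F : set (set Sr)) : isclosed Z -> Z !=set0 ->
  total_on F subset -> (forall W, F W -> isclosed (Z `\` W) /\ (Z `\` W) !=set0) ->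
  (Z `\` \bigcup_(W in F) W) !=set0.
Proof.
move=> cZ [z Zz] Ftot hF; apply: contrapT => ne.
have cover b : Z b -> exists i : {W | F W}, ~ (Z `\` proj1_sig i) b.
  move=> Zb; apply: contrapT => ni; apply: ne; exists b; split => // -[W FW Wb].
  by apply: ni; exists (exist _ W FW) => -[_]; apply.
have [G [fG hG]] := SG_finite_subcover cZ (fun i => (hF _ (proj2_sig i)).1) cover.
have [|W0 [h0 hW0]] := chain_finite_ub Ftot (finite_image (@proj1_sig _ _) fG).
  by move=> _ [i _ <-]; exact: proj2_sig i.
have [b [Zb nb]] : exists b, Z b /\ ~ W0 b.
  case: h0 => [->|/hF [_ [b [Zb nb]]]]; last by exists b.
  by exists z; split => // [].
have [i [Gi ni]] := hG b Zb; apply: ni; split => // ib.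
have GWi : ((@proj1_sig _ _) @` G) (proj1_sig i) by exists i.
exact: nb (hW0 _ GWi _ ib).
Qed.

Definition emul_closed (B : set Sr) := forall p q, B p -> B q -> B (emul p q).

Lemma minimal_closed_subsemigroup (Z : set Sr) : Z !=set0 -> isclosed Z ->
  emul_closed Z ->
  exists B, [/\ B `<=` Z, B !=set0, isclosed B & emul_closed B] /\
    forall B', B' `<=` B -> B' !=set0 -> isclosed B' -> emul_closed B' -> B `<=` B'.
Proof.
move=> Zne cZ sZ.
(* Zorn's lemma, on the complements W of the candidates Z \ W. *)
pose P W := (Z `\` W) !=set0 /\ isclosed (Z `\` W) /\ emul_closed (Z `\` W).
have [|W [[ne [cW sW]] Wmax]] := Zorn_bigcup (P := P).
  move=> F FP Ftot; split; [|split].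
  - by apply: closed_chain_meet => // W /FP [? []].
  - apply: (closed_ext (closedI cZ (closed_bigcap (fun i => (FP _ (proj2_sig i)).2.1)))).
      move=> b sb; split=> [[Zb [_ h]]|[Zb nU]]; split => //.
        by move=> [W' FW' W'b]; have [_] := h (exist _ W' FW'); apply.
      by split => // -[W' FW'] /=; split => // W'b; apply: nU; exists W'.
    by move=> b [/(closed_SG cZ)].
  - move=> p q [Zp nUp] [Zq nUq]; split; first exact: sZ.
    move=> [W' FW' W'pq]; have [_ [_ sW']] := FP _ FW'.
    have [_] := sW' p q (conj Zp (fun h => nUp (ex_intro2 _ _ W' FW' h)))
                        (conj Zq (fun h => nUq (ex_intro2 _ _ W' FW' h))).
    by apply.
exists (Z `\` W); split=> [|B' sub ne' cB' sB' x B0x]; first by split => // b [].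
apply: contrapT => nB'; apply: (Wmax (~` B')).
  split=> [y Wy B'y|h]; first by apply: (sub _ B'y).2.
  by apply: B0x.2; apply: h.
rewrite /P; have -> : Z `\` ~` B' = B'.
  by rewrite setDE setCK setIidr // => y /sub [].
by split.
Qed.

(* Ellis–Numakura: for u in a minimal closed subsemigroup B0, both u * B0 and
   {c in B0 | u * c = u} are closed subsemigroups of B0, hence equal to B0. *)
Lemma emul_idempotent (Z : set Sr) : Z !=set0 -> isclosed Z -> emul_closed Z ->
  exists u, Z u /\ emul u u = u.
Proof.
move=> Zne cZ sZ.
have [B0 [[B0Z [u B0u] cB0 sB0] minB]] := minimal_closed_subsemigroup Zne cZ sZ.
have B0S : B0 `<=` @SG K A := closed_SG cB0.
have su := B0S _ B0u.
pose uB0 := [set c | exists b, B0 b /\ emul u b = c].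
have [b [B0b ub]] : uB0 u.
  apply: (minB uB0 _ _ _ _ u B0u).
  - by move=> _ [b [B0b <-]]; apply: sB0.
  - by exists (emul u u), u.
  - exact: emul_image_closed.
  - move=> _ _ [b1 [B1 <-]] [b2 [B2 <-]]; exists (emul b1 (emul u b2)); split.
      exact: sB0 _ _ B1 (sB0 _ _ B0u B2).
    by rewrite (emulA su (B0S _ B1)).
pose Fix := [set c | B0 c /\ emul u c = u].
have [_ uu] : Fix u.
  apply: (minB Fix _ _ _ _ u B0u).
  - by move=> c [].
  - by exists b.
  - apply: (closed_ext (closedI cB0 (closed_emul_eq su su))).
      by move=> c sc; split=> [[? [_ ?]]|[? ?]].
    by move=> c [/B0S].
  - move=> c1 c2 [B1 e1] [B2 e2]; split; first exact: sB0.
    by rewrite -(emulA su (B0S _ B1)) e1 e2.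
by exists u; split => //; apply: B0Z.
Qed.

(** * Minimal subsets of H_n *)

Lemma orbit_closure_self n (S : set (Hn n)) : orbit_closure S S.
Proof.
move=> F _; exists id; split; first exact: aut_id.
by move=> f _; rewrite (act2E _ _ aut_id) efunK.
Qed.

Lemma orbit_closure_closed n (S : set (Hn n)) : closedH (orbit_closure S).
Proof.
move=> X h F fF; have [Y [OY aY]] := h F fF.
have [g [ga aG]] := OY F fF; exists g; split => // f Ff.
by rewrite (aY f Ff); apply: aG.
Qed.

Lemma orbit_closure_invariant n (S : set (Hn n)) : invariantH (orbit_closure S).
Proof.
move=> X g OX ga F fF.
have [h [ha aH]] := OX _ (finite_image (fun f => emb n (g \o efun f)) fF).
exists (h \o g); split; first exact: aut_comp.
move=> f Ff; rewrite (act2E _ _ ga) (act2E _ _ (aut_comp ha ga)).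
rewrite (aH (emb n (g \o efun f))) ?(act2E _ _ ha); last by exists f.
suff -> : emb n (h \o efun (emb n (g \o efun f))) = emb n ((h \o g) \o efun f) by [].
by apply: eq_emb => a ha' /=; rewrite embE //; apply: partial_emb_aut_comp.
Qed.

Lemma orbit_closure_least n (S : set (Hn n)) (Z : set (set (Hn n))) :
  closedH Z -> invariantH Z -> Z S -> orbit_closure S `<=` Z.
Proof.
move=> cZ iZ ZS X OX; apply: cZ => F fF; have [g [ga aG]] := OX F fF.
by exists (act2 S g); split => //; apply: iZ.
Qed.

Lemma act_set_act (q : Sr) (g : T -> T) n (Q : set (Hn n)) : SG q -> is_aut g ->
  act_set (act q g) Q = act2 (act_set q Q) g.
Proof.
by move=> sq ga; rewrite (act_emul sq ga) (act_set_emul _ sq (pt_SG ga)) act_set_pt.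
Qed.

Lemma act_set_orbit_closure n (S : set (Hn n)) (q : Sr) : SG q ->
  orbit_closure S (act_set q S).
Proof.
move=> sq F fF.
have [k [P [qP hP]]] := fin_nbhd (R := fun c f => act_set c S f <-> act_set q S f) sq
  (fun f => act_set_nbhd S f sq) fF.
have [g [ga gP]] := density sq qP.
exists g; split => // f Ff; rewrite -(act_set_pt _ ga).
by symmetry; apply: (hP _ (pt_SG ga) gP f Ff).
Qed.

(** * The Boolean algebras B_n *)

Lemma Bgen_minimal n (S : set (Hn n)) : minimal_subset S -> Bgen S.
Proof. by move=> mS F hmin _ _ _; apply: hmin. Qed.

Lemma Bgen0 n : Bgen (set0 : set (Hn n)).
Proof. by move=> F _ h0 _ _. Qed.

Lemma BgenC n (P : set (Hn n)) : Bgen P -> Bgen (~` P).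
Proof. by move=> bP F h1 h0 hC hU; exact: hC _ (bP F h1 h0 hC hU). Qed.

Lemma BgenU n (P Q : set (Hn n)) : Bgen P -> Bgen Q -> Bgen (P `|` Q).
Proof.
by move=> bP bQ F h1 h0 hC hU; exact: hU _ _ (bP F h1 h0 hC hU) (bQ F h1 h0 hC hU).
Qed.

Lemma BgenT n : Bgen (setT : set (Hn n)).
Proof. by rewrite -setC0; exact: (BgenC (@Bgen0 n)). Qed.

Lemma Bgen_agree n (a c : Sr) (P : set (Hn n)) : SG a -> SG c -> Bgen P ->
  (forall S, minimal_subset S -> (a n S <-> c n S)) -> (a n P <-> c n P).
Proof.
move=> sa sc bP h; have ua := SG_ultra n sa; have uc := SG_ultra n sc.
apply: (bP [set P | a n P <-> c n P]) => //.
- by split=> h0; exfalso; [exact: ultra0 ua h0|exact: ultra0 uc h0].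
- move=> Q /= e; split=> hN; [apply: (ultraNC uc)|apply: (ultraNC ua)].
    by rewrite -e => /(ultraN ua); apply.
  by rewrite e => /(ultraN uc); apply.
- by move=> Q R /= eQ eR; rewrite (ultraU ua) (ultraU uc) eQ eR.
Qed.

Definition Bclopen (V : set Sr) := exists N0, forall N, (N0 <= N)%N ->
  exists P : set (Hn N), Bgen P /\ forall b, SG b -> (V b <-> b N P).

Lemma Bclopen_ext (V V' : set Sr) : Bclopen V ->
  (forall b, SG b -> (V b <-> V' b)) -> Bclopen V'.
Proof.
move=> [N0 h] E; exists N0 => N le; have [P [bP hP]] := h N le.
by exists P; split => // b sb; rewrite -E // hP.
Qed.

Lemma BclopenT : Bclopen setT.
Proof.
exists 0%N => N _; exists setT; split; first exact: BgenT.
by move=> b sb; split => // _; apply: (ultraT (SG_ultra N sb)).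
Qed.

Lemma BclopenC (V : set Sr) : Bclopen V -> Bclopen (~` V).
Proof.
move=> [N0 h]; exists N0 => N le; have [P [bP hP]] := h N le.
exists (~` P); split; first exact: BgenC.
move=> b sb; rewrite /= (hP b sb); split; first exact: (ultraNC (SG_ultra N sb)).
by move=> h1 h2; apply: (ultraN (SG_ultra N sb) h2 h1).
Qed.

Lemma BclopenU (V1 V2 : set Sr) : Bclopen V1 -> Bclopen V2 -> Bclopen (V1 `|` V2).
Proof.
move=> [N1 h1] [N2 h2]; exists (maxn N1 N2) => N le.
have [P1 [b1 hP1]] := h1 N (leq_trans (leq_maxl N1 N2) le).
have [P2 [b2 hP2]] := h2 N (leq_trans (leq_maxr N1 N2) le).
exists (P1 `|` P2); split; first exact: BgenU.
by move=> b sb; rewrite (ultraU (SG_ultra N sb)) -(hP1 b sb) -(hP2 b sb).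
Qed.

Lemma Bclopen0 : Bclopen set0.
Proof. by apply: (Bclopen_ext (BclopenC BclopenT)) => b _; split => // /(_ I). Qed.

Lemma Bclopen_bigcup (I : Type) (F : set I) (C : I -> set Sr) : finite_set F ->
  (forall i, Bclopen (C i)) -> Bclopen [set b | exists i, F i /\ C i b].
Proof.
move=> fF hC; move: F fF; apply: finite_set_ind.
  by apply: (Bclopen_ext Bclopen0) => b _; split => [[]|[i [[] _]]].
move=> B x _ IH; apply: (Bclopen_ext (BclopenU (hC x) IH)) => b _; split.
  by case=> [cx|[i [Bi ci]]]; [exists x; split => //; left|exists i; split => //; right].
by move=> [i [[->|Bi] ci]]; [left|right; exists i].
Qed.

Lemma Bclopen_closed (V : set Sr) : Bclopen V -> isclosed [set b | SG b /\ V b].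
Proof.
move=> [N0 h]; have [P [_ hP]] := h N0 (leqnn N0).
apply: (closed_ext (basic_closed P)); last by move=> b [].
by move=> b sb; split => -[_ h1]; split => //; [rewrite hP|rewrite -hP].
Qed.

Lemma Bclopen_cover (C0 U : set Sr) : isclosed C0 ->
  (forall b, C0 b -> exists V, Bclopen V /\ V b /\ forall c, SG c -> V c -> U c) ->
  exists V, Bclopen V /\ (forall b, C0 b -> V b) /\ forall c, SG c -> V c -> U c.
Proof.
move=> cC0 hV.
have hex b : exists V, Bclopen V /\ (C0 b -> V b) /\ forall c, SG c -> V c -> U c.
  case: (pselect (C0 b)) => [C0b|nC0].
    by have [V [? [? ?]]] := hV b C0b; exists V.
  by exists set0; split; [exact: Bclopen0|split => [/nC0|c _ []]].
have [Vf hVf] := choice hex.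
have [F [fF hF]] := SG_finite_subcover (C := fun b => [set c | SG c /\ ~ Vf b c]) cC0
  (fun b => Bclopen_closed (BclopenC (hVf b).1))
  (fun b C0b => ex_intro _ b (fun '(conj _ nb) => nb ((hVf b).2.1 C0b))).
exists [set c | exists b, F b /\ Vf b c].
split; first exact: (Bclopen_bigcup fF (fun b => (hVf b).1)).
split=> [b C0b|c sc [b [_ Vbc]]]; last exact: (hVf b).2.2 c sc Vbc.
have [i [Fi nC]] := hF b C0b; exists i; split => //.
by apply: contrapT => nV; apply: nC; split => //; apply: closed_SG cC0 _ C0b.
Qed.

Lemma Bprime_of_Bclopen m (P : set (Hn m)) : Bclopen [set b | b m P] -> Bprime P.
Proof.
move=> [N0 hN0]; set N := maxn N0 m.
have [P' [bP' hP']] := hN0 N (leq_maxl _ _).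
have mN : (m <= N)%N := leq_maxr _ _.
exists N; split => //; suff -> : inc m N P = P' by [].
apply/predeqP => x; have [g [ga <-]] := emb_aut_surj x; have sg := pt_SG ga.
exact: iff_trans (iff_sym (SG_incl P sg mN)) (hP' _ sg).
Qed.

Lemma minimal_separating m (a c : Sr) : SG a -> SG c ->
  @Bprime K A m = setT -> forall P : set (Hn m), a m P -> ~ c m P ->
  exists n (S : set (Hn n)), minimal_subset S /\ ~ (a n S <-> c n S).
Proof.
move=> sa sc hB P aP ncP.
have [n [mn bP]] : Bprime P by rewrite hB.
apply: contrapT => nS; apply: ncP; rewrite (SG_incl _ sc mn) -(Bgen_agree sa sc bP).
  by rewrite -(SG_incl _ sa mn).
by move=> S mS; apply: contrapT => ne; apply: nS; exists n, S.
Qed.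

(** * Retractions onto M *)

Lemma continuous_eq_emul (phi : Sr -> Sr) (p : Sr) :
  (forall n (S : set (Hn n)), isopen [set a | SG a /\ phi a n S]) ->
  (forall a, SG a -> SG (phi a)) -> SG p ->
  (forall g, is_aut g -> phi (pt g) = emul p (pt g)) ->
  forall a, SG a -> phi a = emul p a.
Proof.
move=> phic phiSG sp phipt a sa.
apply: SG_eq; [exact: phiSG|exact: emul_SG|] => n Q pQ; apply: contrapT => nQ.
have [_ /(_ a (conj sa pQ)) [n1 [Q1 [aQ1 hQ1]]]] := phic n Q.
have aQ2 : a n (~` act_set p Q) by apply: (ultraNC (SG_ultra n sa)).
have [N [Q' [aQ' h]]] := nbhdI sa aQ1 aQ2.
have [g [ga gQ']] := density sa aQ'.
have sg := pt_SG ga; have [g1 g2] := h _ sg gQ'.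
have [_] := hQ1 _ sg g1.
by rewrite phipt.
Qed.

Section MinimalSubflow.
Variable M : set Sr.
Hypothesis hM : minimal_subflow M.

Lemma M_SG : M `<=` @SG K A. Proof. by case: hM. Qed.
Lemma M_neq0 : M !=set0. Proof. by case: hM => _ []. Qed.
Lemma M_closed : isclosed M. Proof. by case: hM => _ [_ []]. Qed.
Lemma M_act a (g : T -> T) : M a -> is_aut g -> M (act a g).
Proof. by case: hM => _ [_ [_ [h _]]]; apply: h. Qed.
Lemma M_minimal (N : set Sr) : N `<=` M -> N !=set0 -> isclosed N ->
  Defs.invariant N -> N = M.
Proof. by case: hM => _ [_ [_ [_ h]]]; apply: h. Qed.

Lemma emul_M (p b : Sr) : M p -> SG b -> M (emul p b).
Proof.
move=> Mp sb; have sp := M_SG Mp; apply: contrapT => nM.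
have [n [Q [bQ h]]] := closed_nbhd M_closed (emul_SG sp sb) nM.
have [g [ga gQ]] := density sb bQ.
apply: (h (act p g)); last exact: M_act.
  by rewrite (act_emul sp ga); apply: emul_SG => //; apply: pt_SG.
by rewrite (act_emul sp ga).
Qed.

(* By minimality, M = u * S(G), on which left multiplication by u is the identity. *)
Lemma retraction_emul (u : Sr) : M u -> emul u u = u -> retraction M (emul u).
Proof.
move=> Mu uu; have su := M_SG Mu; split; [|split; [|split]].
- by move=> a sa; apply: emul_M.
- move=> n S; split => [a []//|a [sa h]].
  by exists n, (act_set u S); split => // b sb bS.
- move=> a g sa ga.
  by rewrite (act_emul sa ga) (act_emul (emul_SG su sa) ga) (emulA su sa).
move=> a Ma.
pose I := [set c | exists b, SG b /\ emul u b = c].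
have IM : I = M.
  apply: M_minimal.
  - by move=> _ [b [sb <-]]; apply: emul_M.
  - by exists (emul u u), u.
  - apply: (closed_ext (emul_image_closed su SG_closed)) => [c sc|_ [b [sb <-]]].
      by split=> -[b [sb e]]; exists b.
    exact: emul_SG.
  - move=> _ g [b [sb <-]] ga; exists (emul b (pt g)); split.
      by apply: emul_SG => //; apply: pt_SG.
    by rewrite (act_emul (emul_SG su sb) ga) (emulA su sb).
have [b [sb <-]] : I a by rewrite IM.
by rewrite -(emulA su su) uu.
Qed.

Lemma retractionE (phi : Sr -> Sr) : retraction M phi ->
  M (phi (pt id)) /\ forall a, SG a -> phi a = emul (phi (pt id)) a.
Proof.
move=> [phiM [phic [phieq _]]]; have Mp := phiM _ (pt_SG aut_id); have sp := M_SG Mp.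
split=> //; apply: continuous_eq_emul => // [a sa|g ga]; first exact: M_SG (phiM a sa).
by rewrite -(act_emul sp ga) -(phieq _ _ (pt_SG aut_id) ga) act_pt.
Qed.

Definition act_sets n (Q : set (Hn n)) : set (set (Hn n)) :=
  [set X | exists q, M q /\ act_set q Q = X].

Lemma act_sets_invariant n (Q : set (Hn n)) : invariantH (act_sets Q).
Proof.
move=> _ g [q [Mq <-]] ga; exists (act q g); split; first exact: M_act.
exact: act_set_act (M_SG Mq) ga.
Qed.

Lemma act_sets_closed n (Q : set (Hn n)) : closedH (act_sets Q).
Proof.
move=> X h.
have [|q [Mq hq]] := SG_compact (C := fun f => [set q | SG q /\ (act_set q Q f <-> X f)])
  M_closed (fun f => closed_act_set Q f (X f)).
  move=> F fF; have [_ [[q [Mq <-]] aY]] := h _ fF.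
  by exists q; split => // f Ff; split; [exact: M_SG|symmetry; apply: aY].
by exists q; split => //; apply/predeqP => f; have [_ ->] := hq f.
Qed.

Lemma act_sets_minimal n (Q : set (Hn n)) (Z : set (set (Hn n))) :
  Z `<=` act_sets Q -> Z !=set0 -> closedH Z -> invariantH Z -> Z = act_sets Q.
Proof.
move=> sub [X0 ZX0] cZ iZ.
pose N := [set q | M q /\ Z (act_set q Q)].
have NM : N = M.
  apply: M_minimal => [q []//|||].
  - by have [q [Mq eq]] := sub _ ZX0; exists q; split => //; rewrite eq.
  - apply: (closed_ext (closedI M_closed (closed_act_set_preimage Q cZ))).
      by move=> b sb; split=> [[Mb [_ Zb]]|[Mb Zb]].
    by move=> b [/M_SG].
  - move=> q g [Mq Zq] ga; split; first exact: M_act.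
    by rewrite (act_set_act _ (M_SG Mq) ga); apply: iZ.
apply/seteqP; split => // _ [q [Mq <-]].
by have [] : N q by rewrite NM.
Qed.

Lemma minimal_subset_act_set (p : Sr) n (Q : set (Hn n)) : M p ->
  minimal_subset (act_set p Q).
Proof.
move=> Mp.
have E : orbit_closure (act_set p Q) = act_sets Q.
  apply: act_sets_minimal; last 3 first.
  - by exists (act_set p Q); apply: orbit_closure_self.
  - exact: orbit_closure_closed.
  - exact: orbit_closure_invariant.
  apply: orbit_closure_least; [exact: act_sets_closed|exact: act_sets_invariant|].
  by exists p.
rewrite /minimal_subset E; split; first by exists (act_set p Q), p.
split; first exact: act_sets_closed.
split; first exact: act_sets_invariant.
by move=> Z ZO Zne cZ iZ; apply: act_sets_minimal.
Qed.

Lemma minimal_subset_fixed n (S : set (Hn n)) : minimal_subset S ->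
  exists q, M q /\ act_set q S = S.
Proof.
move=> [_ [_ [_ hmin]]].
have sub : act_sets S `<=` orbit_closure S.
  by move=> _ [q [Mq <-]]; apply: act_set_orbit_closure; apply: M_SG.
have [q0 Mq0] := M_neq0.
have E := hmin _ sub (ex_intro _ _ (ex_intro _ q0 (conj Mq0 erefl)))
  (@act_sets_closed n S) (@act_sets_invariant n S).
have [q [Mq e]] : act_sets S S by rewrite E; apply: orbit_closure_self.
by exists q.
Qed.

Lemma Bclopen_act_set (p : Sr) k (Q : set (Hn k)) : M p ->
  Bclopen [set b | b k (act_set p Q)].
Proof.
move=> Mp; exists k => N kN; exists (inc k N (act_set p Q)); split.
  rewrite -act_set_incl //; last exact: M_SG.
  by apply: Bgen_minimal; apply: minimal_subset_act_set.
by move=> b sb; apply: SG_incl.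
Qed.

Lemma idempotent_fixing n (S : set (Hn n)) : minimal_subset S ->
  exists u, [/\ M u, act_set u S = S & emul u u = u].
Proof.
move=> mS; pose Fix := [set u | M u /\ act_set u S = S].
have Fix_neq0 : Fix !=set0 by have [q] := minimal_subset_fixed mS; exists q.
have Fix_closed : isclosed Fix.
  apply: (closed_ext (closedI M_closed
    (closed_bigcap (fun f => closed_act_set S f (S f))))).
    move=> b sb; split=> [[Mb [_ h]]|[Mb e]]; split => //.
      by apply/predeqP => f; have [_] := h f.
    by split => // f; split => //; rewrite e.
  by move=> b [/M_SG].
have Fix_emul : emul_closed Fix.
  move=> x y [Mx ex] [My ey]; split; first exact: emul_M Mx (M_SG My).
  by rewrite act_set_emul ?ex ?ey //; apply: M_SG.
have [u [[Mu fu] uu]] := emul_idempotent Fix_neq0 Fix_closed Fix_emul.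
by exists u.
Qed.

Lemma Bprime_retractions_separate : (forall m, @Bprime K A m = setT) ->
  forall a c : Sr, SG a -> SG c -> a <> c ->
  exists phi, retraction M phi /\ phi a <> phi c.
Proof.
move=> hB a c sa sc nac.
have [m [P [aP ncP]]] := SG_neq sa sc nac.
have [n [S [mS nS]]] := minimal_separating sa sc (hB m) aP ncP.
have [u [Mu fu uu]] := idempotent_fixing mS.
exists (emul u); split; first exact: retraction_emul.
by move=> e; apply: nS; have := congr1 (fun b : Sr => b n S) e; rewrite /emul fu => ->.
Qed.

Lemma retractions_separate_Bprime : (forall a c : Sr, SG a -> SG c -> a <> c ->
  exists phi, retraction M phi /\ phi a <> phi c) ->
  forall m, @Bprime K A m = setT.
Proof.
move=> hsep m; apply/seteqP; split => // P _; apply: Bprime_of_Bclopen.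
pose U := [set b : Sr | b m P].
have sep a c : SG a -> SG c -> U a -> ~ U c -> exists V, Bclopen V /\ V a /\ ~ V c.
  move=> sa sc Ua nUc; have nac : a <> c by move=> e; apply: nUc; rewrite -e.
  have [phi [rphi]] := hsep a c sa sc nac; have [Mp eqs] := retractionE rphi.
  rewrite (eqs a sa) (eqs c sc) => nphi; have sp := M_SG Mp.
  have [k [Q [aQ ncQ]]] := SG_neq (emul_SG sp sa) (emul_SG sp sc) nphi.
  by exists [set b | b k (act_set (phi (pt id)) Q)]; split; [apply: Bclopen_act_set|].
(* Compactness of {c | P notin c(m)}, then of {b | P in b(m)}, turns the pointwise
   separation into a B-clopen description of U. *)
have local a : SG a -> U a -> exists W, Bclopen W /\ W a /\ forall c, SG c -> W c -> U c.
  move=> sa Ua.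
  have [|V [bV [hV Va]]] := Bclopen_cover (U := [set c | c <> a]) (basic_closed (~` P)).
    move=> c [sc ncP]; have nUc : ~ U c := fun cP => ultraN (SG_ultra m sc) cP ncP.
    have [V [bV [Va nVc]]] := sep a c sa sc Ua nUc.
    exists (~` V); split; first exact: BclopenC.
    by split => // d _ nVd eda; apply: nVd; rewrite eda.
  exists (~` V); split; first exact: BclopenC.
  split=> [/(Va a sa)|c sc nVc]; first by [].
  apply: contrapT => nUc; apply: nVc; apply: hV; split => //.
  exact: (ultraNC (SG_ultra m sc) nUc).
have [V [bV [hV VU]]] :=
  Bclopen_cover (basic_closed P) (fun b '(conj sb Ub) => local b sb Ub).
by apply: (Bclopen_ext bV) => b sb; split; [exact: VU|move=> Ub; apply: hV].
Qed.

End MinimalSubflow.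
End SamuelCompactification.

Theorem mainTheorem17 (K : relstruct) (A : nat -> set (carrier K)) :
  exhaustion A -> ultrahomogeneous K ->
  forall M : set (@Sraw K A), @minimal_subflow K A M ->
  ((forall alpha gamma : @Sraw K A,
      @SG K A alpha -> @SG K A gamma -> alpha <> gamma ->
      exists phi : @Sraw K A -> @Sraw K A,
        @retraction K A M phi /\ phi alpha <> phi gamma)
   <->
   (forall m : nat, @Bprime K A m = setT)).
Proof.
move=> exA uhK M hM; split.
  exact: retractions_separate_Bprime.
exact: Bprime_retractions_separate.
Qed.
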